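(* Let $r,k,m$ be positive integers and $\alpha$ real with $\alpha>k>r$, such that $\alpha-m$ is not a negative integer and $\alpha\ne m+r-j$, $\alpha\neq m+k-j$ for $j=1,\dots,m$. Then $$\sum_{n=1}^\infty\frac{H_{n+\alpha-m}^{(2)}}{(n+r)(n+k)}=\frac1{k-r}\Bigg\{(r-\alpha)\sum_{j=1}^r\frac{H_{\alpha+j-r}^{(2)}}{j(\alpha+j-r)}-(k-\alpha)\sum_{j=1}^k\frac{H_{\alpha+j-k}^{(2)}}{j(\alpha+j-k)}-\sum_{j=1}^{k-r}\frac{H_{\alpha+j-k}}{(\alpha+j-k)^2}$$ $$+2H_{\alpha-r}^{(3)}+H_{\alpha-k}\zeta(2)+2H_{\alpha-r}H_{\alpha-r}^{(2)}-2H_{\alpha-k}^{(3)}-H_{\alpha-r}\zeta(2)-2H_{\alpha-k}H_{\alpha-k}^{(2)}\Bigg\}$$ $$-\frac1{k-r}\Bigg\{\sum_{j=1}^m\frac{H_{\alpha+j-m}-H_r}{(\alpha+j-m-r)^2}-\sum_{j=1}^m\frac{\zeta(2)-H_{\alpha+j-m}^{(2)}}{\alpha+j-m-r}-\sum_{j=1}^m\frac{H_{\alpha+j-m}-H_k}{(\alpha+j-m-k)^2}+\sum_{j=1}^m\frac{\zeta(2)-H_{\alpha+j-m}^{(2)}}{\alpha+j-m-k}\Bigg\}.$$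
   Context: Shifted harmonic numbers: for a real $\alpha$ that is not a negative integer, $H_\alpha := \sum_{k=1}^\infty\left(\frac1k-\frac1{k+\alpha}\right)$ and, for integers $m\ge 2$, $H_\alpha^{(m)} := \sum_{k=1}^\infty\left(\frac1{k^m}-\frac1{(k+\alpha)^m}\right)=\zeta(m)-\zeta(m,\alpha+1)$, where $\zeta$ is the Riemann zeta function and $\zeta(s,\alpha+1)=\sum_{n=1}^\infty (n+\alpha)^{-s}$ is the Hurwitz zeta function. For nonnegative integers these are the ordinary harmonic numbers. Empty sums are $0$. *)

From Stdlib Require Import Reals Lra ClassicalEpsilon.
Open Scope R_scope.

(* Limit of a real sequence (0 if it does not converge; only used on
   convergent sequences). *)
Definition lim_seq (u : nat -> R) : R :=
  match excluded_middle_informative (exists l, Un_cv u l) with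
  | left H => proj1_sig (constructive_indefinite_description _ H)
  | right _ => 0
  end.

Fixpoint fsum (n : nat) (f : nat -> R) : R :=
  match n with
  | O => 0
  | S p => fsum p f + f (S p)
  end.

Definition psum (a : nat -> R) (N : nat) : R := fsum N a.

Definition Hsh (alpha : R) : R :=
  lim_seq (psum (fun k => 1 / INR k - 1 / (INR k + alpha))).

Definition Hshm (m : nat) (alpha : R) : R :=
  lim_seq (psum (fun k => 1 / INR k ^ m - 1 / (INR k + alpha) ^ m)).

Definition zeta (s : nat) : R := lim_seq (psum (fun n => 1 / INR n ^ s)).

From Stdlib Require Import Reals Lra Lia FunctionalExtensionality ClassicalEpsilon.
Open Scope R_scope.

(* Since H^(2)_{x+m} = H^(2)_x + sum_{j=1}^m 1/(x+j)^2, the summand is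
   (1/(k-r)) H^(2)_{n+alpha} (1/(n+r) - 1/(n+k)) minus m rational functions of n with
   simple poles at -r, -k and a double pole at m-alpha-j, whose series partial fractions
   evaluate through H_c, H^(2)_c and zeta(2).  Splitting
   1/(n+r) - 1/(n+k) = sum_{s=r}^{k-1} 1/((n+s)(n+s+1)) reduces the first series to tails
   of sum_p H^(2)_{p+x}/(p(p+1)) with x = alpha-s, which Abel summation turns into
   H^(2)_x + sum_p 1/(p(p+x)^2); the closed forms obtained for consecutive s telescope. *)

Lemma fsum_ext n f g :
  (forall j, (1 <= j <= n)%nat -> f j = g j) -> fsum n f = fsum n g.
Proof.
  induction n as [|n IH]; intros Hfg; simpl; [reflexivity|].
  rewrite IH, Hfg; [reflexivity | lia | intros j Hj; apply Hfg; lia].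
Qed.

Lemma fsum_0 n : fsum n (fun _ => 0) = 0.
Proof. induction n as [|n IH]; simpl; [|rewrite IH]; ring. Qed.

Lemma fsum_plus n f g : fsum n (fun j => f j + g j) = fsum n f + fsum n g.
Proof. induction n as [|n IH]; simpl; [|rewrite IH]; ring. Qed.

Lemma fsum_minus n f g : fsum n (fun j => f j - g j) = fsum n f - fsum n g.
Proof. induction n as [|n IH]; simpl; [|rewrite IH]; ring. Qed.

Lemma fsum_scal n a f : fsum n (fun j => a * f j) = a * fsum n f.
Proof. induction n as [|n IH]; simpl; [|rewrite IH]; ring. Qed.

Lemma fsum_succ_l n f : fsum (S n) f = f 1%nat + fsum n (fun j => f (S j)).
Proof. induction n as [|n IH]; simpl in *; [|rewrite IH]; ring. Qed.

Lemma fsum_add n s f : fsum (n + s) f = fsum s f + fsum n (fun j => f (j + s)%nat).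
Proof. induction n as [|n IH]; simpl; [|rewrite IH]; ring. Qed.

Lemma fsum_le n f g : (forall j, (1 <= j)%nat -> f j <= g j) -> fsum n f <= fsum n g.
Proof.
  induction n as [|n IH]; intros Hfg; simpl; [lra|].
  pose proof (Hfg (S n) ltac:(lia)). pose proof (IH Hfg). lra.
Qed.

Lemma fsum_abel n (u a : nat -> R) :
  fsum n (fun j => u j * (a j - a (S j))) =
  u 0%nat * a 1%nat + fsum n (fun j => (u j - u (pred j)) * a j) - u n * a (S n).
Proof. induction n as [|n IH]; simpl; [|rewrite IH; simpl]; ring. Qed.

Lemma lim_seq_cv u l : Un_cv u l -> lim_seq u = l.
Proof.
  intros Hu. unfold lim_seq.
  destruct (excluded_middle_informative _) as [Hex|Hnex].
  - destruct (constructive_indefinite_description _ Hex) as [l' Hl']; simpl.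
    exact (UL_sequence u l' l Hl' Hu).
  - exfalso; apply Hnex; exists l; exact Hu.
Qed.

Lemma Un_cv_ext u v l : (forall n, u n = v n) -> Un_cv u l -> Un_cv v l.
Proof. intros Huv Hu. replace v with u; [exact Hu | apply functional_extensionality, Huv]. Qed.

Lemma Un_cv_eq_lim u l l' : Un_cv u l -> l = l' -> Un_cv u l'.
Proof. intros Hu <-; exact Hu. Qed.

Lemma Un_cv_const c : Un_cv (fun _ => c) c.
Proof.
  intros eps Heps; exists 0%nat; intros n _.
  unfold R_dist; rewrite Rminus_diag, Rabs_R0; exact Heps.
Qed.

Lemma Un_cv_scal a u l : Un_cv u l -> Un_cv (fun n => a * u n) (a * l).
Proof. intros Hu; exact (CV_mult _ _ _ _ (Un_cv_const a) Hu). Qed.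

Lemma Un_cv_inv_pow y m : (1 <= m)%nat -> Un_cv (fun N => 1 / (INR N + y) ^ m) 0.
Proof.
  intros Hm.
  apply Un_cv_ext with (fun N => / (INR N + y) ^ m); [intros; unfold Rdiv; ring|].
  apply cv_infty_cv_0. intros M.
  destruct (INR_unbounded (Rabs M + Rabs y + 1)) as [N HN].
  exists N; intros n Hn. apply le_INR in Hn.
  pose proof (Rle_abs M). pose proof (Rabs_pos M). pose proof (Rle_abs (- y)).
  rewrite Rabs_Ropp in *.
  assert (Hbase : 1 <= INR n + y) by lra.
  assert (INR n + y <= (INR n + y) ^ m).
  { rewrite <- (pow_1 (INR n + y)) at 1. apply Rle_pow; [exact Hbase | exact Hm]. }
  lra.
Qed.

Lemma psum_ext a b N : (forall n, (1 <= n)%nat -> a n = b n) -> psum a N = psum b N.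
Proof. intros Hab; apply fsum_ext; intros j Hj; apply Hab; lia. Qed.

Lemma series_ext a b l :
  Un_cv (psum a) l -> (forall n, (1 <= n)%nat -> a n = b n) -> Un_cv (psum b) l.
Proof. intros Ha Hab; apply Un_cv_ext with (psum a); [intros; apply psum_ext|]; assumption. Qed.

Lemma series_0 : Un_cv (psum (fun _ => 0)) 0.
Proof. apply Un_cv_ext with (fun _ => 0); [intros; symmetry; apply fsum_0 | apply Un_cv_const]. Qed.

Lemma series_plus a b la lb : Un_cv (psum a) la -> Un_cv (psum b) lb ->
  Un_cv (psum (fun n => a n + b n)) (la + lb).
Proof.
  intros Ha Hb. apply Un_cv_ext with (fun N => psum a N + psum b N).
  - intros N; symmetry; apply fsum_plus.
  - exact (CV_plus _ _ _ _ Ha Hb).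
Qed.

Lemma series_minus a b la lb : Un_cv (psum a) la -> Un_cv (psum b) lb ->
  Un_cv (psum (fun n => a n - b n)) (la - lb).
Proof.
  intros Ha Hb. apply Un_cv_ext with (fun N => psum a N - psum b N).
  - intros N; symmetry; apply fsum_minus.
  - exact (CV_minus _ _ _ _ Ha Hb).
Qed.

Lemma series_scal c a l : Un_cv (psum a) l -> Un_cv (psum (fun n => c * a n)) (c * l).
Proof.
  intros Ha. apply Un_cv_ext with (fun N => c * psum a N).
  - intros N; symmetry; apply fsum_scal.
  - exact (Un_cv_scal c _ _ Ha).
Qed.

Lemma series_fsum m (a : nat -> nat -> R) (l : nat -> R) :
  (forall j, (1 <= j <= m)%nat -> Un_cv (psum (a j)) (l j)) ->
  Un_cv (psum (fun n => fsum m (fun j => a j n))) (fsum m l).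
Proof.
  induction m as [|m IH]; intros Hl; simpl.
  - exact series_0.
  - apply series_plus; [apply IH; intros j Hj|]; apply Hl; lia.
Qed.

Definition harm_term (m : nat) (x : R) (k : nat) : R := 1 / INR k ^ m - 1 / (INR k + x) ^ m.

Lemma Rdiv_1_le_contravar a b : 0 < a -> a <= b -> 1 / b <= 1 / a.
Proof. intros. unfold Rdiv; rewrite !Rmult_1_l; apply Rinv_le_contravar; assumption. Qed.

Lemma fsum_inv_sq_le n : fsum n (fun k => 1 / INR k ^ 2) <= 2.
Proof.
  (* telescoping against 1/(k-1) - 1/k *)
  assert (Htel : forall N, fsum (S N) (fun k => 1 / INR k ^ 2) <= 2 - 1 / INR (S N)).
  { induction N as [|N IH]; [simpl; lra|].
    change (fsum (S (S N)) (fun k => 1 / INR k ^ 2))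
      with (fsum (S N) (fun k => 1 / INR k ^ 2) + 1 / INR (S (S N)) ^ 2).
    rewrite (S_INR (S N)). set (t := INR (S N)) in *.
    assert (Ht : 1 <= t) by (unfold t; rewrite S_INR; pose proof (pos_INR N); lra).
    assert (Hgap : 1 / t - 1 / (t + 1) - 1 / (t + 1) ^ 2 = 1 / (t * (t + 1) ^ 2)) by (field; lra).
    assert (0 < 1 / (t * (t + 1) ^ 2)).
    { apply Rdiv_lt_0_compat; [lra|]. apply Rmult_lt_0_compat; [lra | apply pow_lt; lra]. }
    lra. }
  destruct n as [|n]; [simpl; lra|].
  pose proof (Htel n). assert (0 < 1 / INR (S n)) by (apply Rdiv_lt_0_compat; [lra | apply lt_0_INR; lia]).
  lra.
Qed.

Lemma harm_term_bound m x k : (1 <= m)%nat -> 0 <= x -> (1 <= k)%nat ->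
  0 <= harm_term m x k <= (1 + x) * (1 / INR k ^ 2).
Proof.
  intros Hm Hx Hk. unfold harm_term.
  assert (Ht : 1 <= INR k) by (apply (le_INR 1); lia).
  set (t := INR k) in *.
  assert (Hp : 0 < t ^ m) by (apply pow_lt; lra).
  assert (1 / (t + x) ^ m <= 1 / t ^ m) by (apply Rdiv_1_le_contravar; [|apply pow_incr]; lra).
  assert (0 < 1 / (t + x) ^ m) by (apply Rdiv_lt_0_compat; [|apply pow_lt]; lra).
  assert (0 < 1 / t ^ 2) by (apply Rdiv_lt_0_compat; nra).
  split; [lra|].
  destruct m as [|[|m]]; [lia| |].
  - rewrite !pow_1.
    replace (1 / t - 1 / (t + x)) with (x * (1 / (t * (t + x)))) by (field; lra).
    assert (1 / (t * (t + x)) <= 1 / t ^ 2) by (apply Rdiv_1_le_contravar; nra).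
    nra.
  - assert (1 / t ^ S (S m) <= 1 / t ^ 2) by (apply Rdiv_1_le_contravar; [nra | apply Rle_pow; [lra | lia]]).
    nra.
Qed.

Lemma harm_series_cv_nonneg m x : (1 <= m)%nat -> 0 <= x ->
  exists l, Un_cv (psum (harm_term m x)) l.
Proof.
  intros Hm Hx.
  destruct (growing_cv (psum (harm_term m x))) as [l Hl]; [| |exists l; exact Hl].
  - intros n. unfold psum; simpl.
    pose proof (harm_term_bound m x (S n) Hm Hx ltac:(lia)). lra.
  - exists ((1 + x) * 2). intros y [i ->]. unfold psum.
    apply Rle_trans with (fsum i (fun k => (1 + x) * (1 / INR k ^ 2))).
    + apply fsum_le; intros; apply harm_term_bound; assumption.
    + rewrite fsum_scal. pose proof (fsum_inv_sq_le i). nra.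
Qed.

Lemma psum_harm_term_succ m x N :
  psum (harm_term m (x + 1)) N - psum (harm_term m x) N = 1 / (x + 1) ^ m - 1 / (INR N + (x + 1)) ^ m.
Proof.
  unfold psum. induction N as [|N IH]; cbn [fsum].
  - rewrite Rplus_0_l; ring.
  - assert (harm_term m (x + 1) (S N) - harm_term m x (S N)
            = 1 / (INR N + (x + 1)) ^ m - 1 / (INR (S N) + (x + 1)) ^ m).
    { unfold harm_term. rewrite S_INR. replace (INR N + 1 + x) with (INR N + (x + 1)) by ring. ring. }
    lra.
Qed.

Lemma series_harm_term_succ m x l : (1 <= m)%nat ->
  Un_cv (psum (harm_term m x)) l <->
  Un_cv (psum (harm_term m (x + 1))) (l + 1 / (x + 1) ^ m).
Proof.
  intros Hm.
  assert (Hdiff : Un_cv (fun N => psum (harm_term m (x + 1)) N - psum (harm_term m x) N) (1 / (x + 1) ^ m)).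
  { eapply Un_cv_ext; [intros N; symmetry; apply psum_harm_term_succ|].
    eapply Un_cv_eq_lim; [apply CV_minus; [apply Un_cv_const | apply Un_cv_inv_pow, Hm] | ring]. }
  split; intros Hl.
  - eapply Un_cv_ext; [|apply (CV_plus _ _ _ _ Hl Hdiff)]. intros N; simpl; ring.
  - eapply Un_cv_ext; [|eapply Un_cv_eq_lim; [apply (CV_minus _ _ _ _ Hl Hdiff)|]].
    + intros N; simpl; ring.
    + ring.
Qed.

(* No restriction on x: at negative integers the junk value 1/0 = 0 enters, but the
   shift identity [psum_harm_term_succ] holds syntactically. *)
Lemma harm_series_cv m x : (1 <= m)%nat -> exists l, Un_cv (psum (harm_term m x)) l.
Proof.
  intros Hm. destruct (INR_unbounded (- x)) as [n Hn].
  revert x Hn. induction n as [|n IH]; intros x Hn.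
  - apply harm_series_cv_nonneg; [exact Hm | simpl in Hn; lra].
  - destruct (IH (x + 1)) as [l Hl]; [rewrite S_INR in Hn; lra|].
    exists (l - 1 / (x + 1) ^ m).
    apply (series_harm_term_succ m x _ Hm). replace (l - 1 / (x + 1) ^ m + 1 / (x + 1) ^ m) with l by ring.
    exact Hl.
Qed.

Lemma Un_cv_Hshm m x : (1 <= m)%nat -> Un_cv (psum (harm_term m x)) (Hshm m x).
Proof.
  intros Hm. destruct (harm_series_cv m x Hm) as [l Hl].
  change (Hshm m x) with (lim_seq (psum (harm_term m x))). rewrite (lim_seq_cv _ _ Hl). exact Hl.
Qed.

Lemma Hshm_succ m x : (1 <= m)%nat -> Hshm m (x + 1) = Hshm m x + 1 / (x + 1) ^ m.
Proof.
  intros Hm. change (Hshm m (x + 1)) with (lim_seq (psum (harm_term m (x + 1)))).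
  apply lim_seq_cv, (series_harm_term_succ m x _ Hm), Un_cv_Hshm, Hm.
Qed.

Lemma Hshm_pred m x : (1 <= m)%nat -> Hshm m (x - 1) = Hshm m x - 1 / x ^ m.
Proof.
  intros Hm. pose proof (Hshm_succ m (x - 1) Hm) as Hs.
  replace (x - 1 + 1) with x in Hs by ring. lra.
Qed.

Lemma Hshm_add_nat m x n : (1 <= m)%nat ->
  Hshm m (x + INR n) = Hshm m x + fsum n (fun j => 1 / (x + INR j) ^ m).
Proof.
  intros Hm. induction n as [|n IH]; cbn [fsum].
  - simpl INR. rewrite Rplus_0_r; ring.
  - rewrite S_INR, <- Rplus_assoc, Hshm_succ, IH by exact Hm. ring.
Qed.

Lemma Hsh_Hshm1 x : Hsh x = Hshm 1 x.
Proof.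
  unfold Hsh, Hshm. f_equal. f_equal. apply functional_extensionality; intros k.
  rewrite !pow_1; reflexivity.
Qed.

Lemma Un_cv_Hsh x : Un_cv (psum (fun k => 1 / INR k - 1 / (INR k + x))) (Hsh x).
Proof.
  rewrite Hsh_Hshm1. eapply series_ext; [apply Un_cv_Hshm; lia|].
  intros n _; unfold harm_term; rewrite !pow_1; reflexivity.
Qed.

Lemma Hsh_pred x : Hsh (x - 1) = Hsh x - 1 / x.
Proof. rewrite !Hsh_Hshm1, Hshm_pred, pow_1 by lia. reflexivity. Qed.

Lemma Hsh_0 : Hsh 0 = 0.
Proof.
  apply lim_seq_cv. eapply series_ext; [exact series_0|].
  intros n _; rewrite Rplus_0_r; ring.
Qed.

Lemma Un_cv_zeta2 : Un_cv (psum (fun n => 1 / INR n ^ 2)) (zeta 2).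
Proof.
  destruct (growing_cv (psum (fun n => 1 / INR n ^ 2))) as [l Hl].
  - intros n. unfold psum; cbn [fsum].
    assert (0 < 1 / INR (S n) ^ 2) by (apply Rdiv_lt_0_compat; [lra | apply pow_lt, lt_0_INR; lia]).
    lra.
  - exists 2. intros y [i ->]. apply fsum_inv_sq_le.
  - unfold zeta. rewrite (lim_seq_cv _ _ Hl). exact Hl.
Qed.

Lemma series_inv_sq c : Un_cv (psum (fun n => 1 / (INR n + c) ^ 2)) (zeta 2 - Hshm 2 c).
Proof.
  eapply series_ext; [apply (series_minus _ _ _ _ Un_cv_zeta2 (Un_cv_Hshm 2 c ltac:(lia)))|].
  intros n _; unfold harm_term; ring.
Qed.

Lemma Un_cv_Hshm2_shift x : Un_cv (fun N => Hshm 2 (INR N + x)) (zeta 2).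
Proof.
  apply Un_cv_ext with (fun N => Hshm 2 x + psum (fun n => 1 / (INR n + x) ^ 2) N).
  - intros N. rewrite (Rplus_comm (INR N) x), (Hshm_add_nat 2 x N) by lia.
    f_equal; apply psum_ext; intros n _; rewrite Rplus_comm; reflexivity.
  - eapply Un_cv_eq_lim; [apply CV_plus; [apply Un_cv_const | apply series_inv_sq] | ring].
Qed.

Lemma series_partial_fraction s c : c <> s ->
  (forall n, (1 <= n)%nat -> INR n + s <> 0) -> (forall n, (1 <= n)%nat -> INR n + c <> 0) ->
  Un_cv (psum (fun n => 1 / ((INR n + s) * (INR n + c) ^ 2)))
    ((Hsh c - Hsh s) / (c - s) ^ 2 - (zeta 2 - Hshm 2 c) / (c - s)).
Proof.
  intros Hcs Hs Hc.
  apply series_ext with (fun n => 1 / (c - s) ^ 2 * ((1 / INR n - 1 / (INR n + c)) - (1 / INR n - 1 / (INR n + s)))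
                                  - 1 / (c - s) * (1 / (INR n + c) ^ 2)).
  - eapply Un_cv_eq_lim.
    + apply series_minus; apply series_scal; [apply series_minus; apply Un_cv_Hsh | apply series_inv_sq].
    + field. lra.
  - intros n Hn. pose proof (Hs n Hn). pose proof (Hc n Hn).
    assert (0 < INR n) by (apply lt_0_INR; lia).
    field. repeat split; lra.
Qed.

Lemma series_two_poles a b c : a <> b -> c <> a -> c <> b ->
  (forall n, (1 <= n)%nat -> INR n + a <> 0) -> (forall n, (1 <= n)%nat -> INR n + b <> 0) ->
  (forall n, (1 <= n)%nat -> INR n + c <> 0) ->
  Un_cv (psum (fun n => 1 / ((INR n + a) * (INR n + b) * (INR n + c) ^ 2)))
    (1 / (b - a) *
      (((Hsh c - Hsh a) / (c - a) ^ 2 - (zeta 2 - Hshm 2 c) / (c - a))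
       - ((Hsh c - Hsh b) / (c - b) ^ 2 - (zeta 2 - Hshm 2 c) / (c - b)))).
Proof.
  intros Hab Hca Hcb Ha Hb Hc.
  eapply series_ext; [apply series_scal, series_minus; apply series_partial_fraction; assumption|].
  intros n Hn. pose proof (Ha n Hn). pose proof (Hb n Hn). pose proof (Hc n Hn).
  cbv beta. field. repeat split; lra.
Qed.

Definition H2_pair_sum (x : R) : R := Hshm 2 x + Hsh x / x ^ 2 - (zeta 2 - Hshm 2 x) / x.

(* Abel summation against [1/p - 1/(p+1)], using [H^(2)_{x+p} - H^(2)_{x+p-1} = 1/(x+p)^2]. *)
Lemma series_H2_pair x : 0 < x ->
  Un_cv (psum (fun p => Hshm 2 (INR p + x) / (INR p * (INR p + 1)))) (H2_pair_sum x).
Proof.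
  intros Hx.
  set (u := fun p : nat => Hshm 2 (INR p + x)).
  set (a := fun p : nat => 1 / INR p).
  apply Un_cv_ext with (fun N => u 0%nat * a 1%nat
    + psum (fun p => 1 / ((INR p + 0) * (INR p + x) ^ 2)) N - u N * a (S N)).
  { intros N. unfold psum. symmetry.
    rewrite (fsum_ext N _ (fun p => u p * (a p - a (S p)))), fsum_abel.
    - do 2 f_equal. apply fsum_ext; intros [|p] Hp; [lia|]. unfold u, a. simpl pred.
      replace (INR p + x) with (INR (S p) + x - 1) by (rewrite S_INR; ring).
      rewrite Hshm_pred by lia. assert (0 < INR (S p)) by (apply lt_0_INR; lia).
      field. lra.
    - intros p Hp. unfold u, a. assert (0 < INR p) by (apply lt_0_INR; lia).
      rewrite S_INR. field. lra. }
  eapply Un_cv_eq_lim.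
  - apply CV_minus; [apply CV_plus; [apply Un_cv_const|] | apply CV_mult].
    + apply series_partial_fraction; intros; [lra| |]; assert (0 < INR n) by (apply lt_0_INR; lia); lra.
    + apply Un_cv_Hshm2_shift.
    + apply Un_cv_ext with (fun N => 1 / (INR N + 1) ^ 1); [|apply Un_cv_inv_pow; lia].
      intros N; unfold a; rewrite S_INR, pow_1; reflexivity.
  - unfold u, a, H2_pair_sum. rewrite Hsh_0. simpl INR. rewrite Rplus_0_l. field. lra.
Qed.

Lemma series_H2_pair_shift alpha s : 0 < alpha - INR s ->
  Un_cv (psum (fun n => Hshm 2 (INR n + alpha) / ((INR n + INR s) * (INR n + INR s + 1))))
    (H2_pair_sum (alpha - INR s)
     - fsum s (fun j => Hshm 2 (alpha + INR j - INR s) / (INR j * (INR j + 1)))).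
Proof.
  intros Hx.
  set (g := fun p : nat => Hshm 2 (INR p + (alpha - INR s)) / (INR p * (INR p + 1))).
  apply Un_cv_ext with (fun N => psum g (N + s) - psum g s).
  { intros N. unfold psum. rewrite fsum_add. ring_simplify. apply fsum_ext. intros j _.
    unfold g. rewrite plus_INR.
    replace (INR j + INR s + (alpha - INR s)) with (INR j + alpha) by ring. reflexivity. }
  apply CV_minus.
  - apply (CV_shift' (psum g) s), series_H2_pair, Hx.
  - replace (fsum s _) with (psum g s); [apply Un_cv_const|].
    apply psum_ext; intros j _; unfold g.
    replace (INR j + (alpha - INR s)) with (alpha + INR j - INR s) by ring. reflexivity.
Qed.

Lemma weighted_fsum_succ (g : R -> R) alpha k : 0 < alpha - INR k ->
  (INR (S k) - alpha) * fsum (S k) (fun j => g (alpha + INR j - INR (S k)) / (INR j * (alpha + INR j - INR (S k))))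
  = (INR k - alpha) * fsum k (fun j => g (alpha + INR j - INR k) / (INR j * (alpha + INR j - INR k)))
    + (INR (S k) - alpha) * g (alpha - INR k) / (alpha - INR k)
    + fsum k (fun j => g (alpha + INR j - INR k) / (INR j * (INR j + 1))).
Proof.
  intros Hx.
  assert (Hreindex : fsum k (fun j => g (alpha + INR (S j) - INR (S k)) / (INR (S j) * (alpha + INR (S j) - INR (S k))))
    = fsum k (fun j => g (alpha + INR j - INR k) / ((INR j + 1) * (alpha + INR j - INR k)))).
  { apply fsum_ext; intros j _. rewrite !S_INR.
    replace (alpha + (INR j + 1) - (INR k + 1)) with (alpha + INR j - INR k) by ring. reflexivity. }
  (* [x/(j(x+j)) = (x-1)/((j+1)(x+j)) + 1/(j(j+1))] with [x = alpha - k] *)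
  assert (Hsplit : (alpha - INR k) * fsum k (fun j => g (alpha + INR j - INR k) / (INR j * (alpha + INR j - INR k)))
    = (alpha - INR k - 1) * fsum k (fun j => g (alpha + INR j - INR k) / ((INR j + 1) * (alpha + INR j - INR k)))
      + fsum k (fun j => g (alpha + INR j - INR k) / (INR j * (INR j + 1)))).
  { rewrite <- !fsum_scal, <- fsum_plus. apply fsum_ext; intros j Hj.
    assert (0 < INR j) by (apply lt_0_INR; lia). field. lra. }
  rewrite fsum_succ_l, Hreindex.
  change (INR 1) with 1.
  replace (alpha + 1 - INR (S k)) with (alpha - INR k) by (rewrite S_INR; ring).
  rewrite S_INR, Rmult_1_l. unfold Rdiv in *. lra.
Qed.

Lemma fsum_window_succ (g : R -> R) alpha r k : (r <= k)%nat ->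
  fsum (S k - r) (fun j => g (alpha + INR j - INR (S k)))
  = g (alpha - INR k) + fsum (k - r) (fun j => g (alpha + INR j - INR k)).
Proof.
  intros Hrk. replace (S k - r)%nat with (S (k - r)) by lia.
  rewrite fsum_succ_l. f_equal.
  - f_equal. change (INR 1) with 1. rewrite S_INR; ring.
  - apply fsum_ext; intros j _. f_equal. rewrite !S_INR; ring.
Qed.

Definition H2_diff_value (r : nat) (alpha : R) (k : nat) : R :=
  (INR r - alpha) * fsum r (fun j => Hshm 2 (alpha + INR j - INR r) / (INR j * (alpha + INR j - INR r)))
  - (INR k - alpha) * fsum k (fun j => Hshm 2 (alpha + INR j - INR k) / (INR j * (alpha + INR j - INR k)))
  - fsum (k - r) (fun j => Hsh (alpha + INR j - INR k) / (alpha + INR j - INR k) ^ 2)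
  + 2 * Hshm 3 (alpha - INR r) + Hsh (alpha - INR k) * zeta 2
  + 2 * Hsh (alpha - INR r) * Hshm 2 (alpha - INR r)
  - 2 * Hshm 3 (alpha - INR k) - Hsh (alpha - INR r) * zeta 2
  - 2 * Hsh (alpha - INR k) * Hshm 2 (alpha - INR k).

Lemma H2_diff_value_succ r alpha k : (r <= k)%nat -> 0 < alpha - INR k ->
  H2_diff_value r alpha (S k) = H2_diff_value r alpha k
    + (H2_pair_sum (alpha - INR k)
       - fsum k (fun j => Hshm 2 (alpha + INR j - INR k) / (INR j * (INR j + 1)))).
Proof.
  intros Hrk Hx. unfold H2_diff_value, H2_pair_sum.
  rewrite (weighted_fsum_succ (Hshm 2)), (fsum_window_succ (fun y => Hsh y / y ^ 2)) by assumption.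
  replace (alpha - INR (S k)) with (alpha - INR k - 1) by (rewrite S_INR; ring).
  rewrite Hsh_pred, !Hshm_pred by lia. rewrite S_INR.
  field. lra.
Qed.

Lemma series_H2_diff r alpha k : (r <= k)%nat -> INR k < alpha ->
  Un_cv (psum (fun n => Hshm 2 (INR n + alpha) * (1 / (INR n + INR r) - 1 / (INR n + INR k))))
    (H2_diff_value r alpha k).
Proof.
  intros Hrk. induction Hrk as [|k Hrk IH]; intros Hk.
  - eapply series_ext; [eapply Un_cv_eq_lim; [exact series_0|] | intros n _; cbv beta; ring].
    unfold H2_diff_value. rewrite Nat.sub_diag. cbn [fsum]. ring.
  - rewrite S_INR in Hk.
    eapply series_ext.
    + eapply Un_cv_eq_lim.
      * apply series_plus; [apply IH; lra | apply (series_H2_pair_shift alpha k); lra].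
      * symmetry; apply H2_diff_value_succ; [exact Hrk | lra].
    + intros n Hn. assert (0 < INR n) by (apply lt_0_INR; lia).
      pose proof (pos_INR r). pose proof (pos_INR k).
      rewrite S_INR. field. repeat split; lra.
Qed.

Lemma Hshm2_shift_over_two_poles (t a b alpha : R) (m : nat) :
  t + a <> 0 -> t + b <> 0 -> a <> b ->
  (forall j, (1 <= j <= m)%nat -> t + (alpha + INR j - INR m) <> 0) ->
  Hshm 2 (t + alpha - INR m) / ((t + a) * (t + b))
  = 1 / (b - a) * (Hshm 2 (t + alpha) * (1 / (t + a) - 1 / (t + b)))
    - fsum m (fun j => 1 / ((t + a) * (t + b) * (t + (alpha + INR j - INR m)) ^ 2)).
Proof.
  intros Ha Hb Hab Hpoles.
  replace (Hshm 2 (t + alpha))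
    with (Hshm 2 (t + alpha - INR m) + fsum m (fun j => 1 / (t + alpha - INR m + INR j) ^ 2))
    by (rewrite <- Hshm_add_nat by lia; f_equal; ring).
  replace (fsum m (fun j => 1 / ((t + a) * (t + b) * (t + (alpha + INR j - INR m)) ^ 2)))
    with (1 / ((t + a) * (t + b)) * fsum m (fun j => 1 / (t + alpha - INR m + INR j) ^ 2)).
  - field. repeat split; lra.
  - rewrite <- fsum_scal. apply fsum_ext; intros j Hj. pose proof (Hpoles j Hj).
    replace (t + alpha - INR m + INR j) with (t + (alpha + INR j - INR m)) by ring.
    field. repeat split; assumption.
Qed.

Theorem corollary2p5 (r k m : nat) (alpha : R)
  (hr : (0 < r)%nat) (hk : (0 < k)%nat) (hm : (0 < m)%nat)
  (hrk : (r < k)%nat) (hka : INR k < alpha)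
  (hneg : forall n : nat, alpha - INR m <> - INR (S n))
  (hjr : forall j : nat, (1 <= j <= m)%nat -> alpha <> INR m + INR r - INR j)
  (hjk : forall j : nat, (1 <= j <= m)%nat -> alpha <> INR m + INR k - INR j) :
  Un_cv
    (psum (fun n => Hshm 2 (INR n + alpha - INR m) / ((INR n + INR r) * (INR n + INR k))))
    ( 1 / (INR k - INR r) *
        ( (INR r - alpha) * fsum r (fun j => Hshm 2 (alpha + INR j - INR r) / (INR j * (alpha + INR j - INR r)))
        - (INR k - alpha) * fsum k (fun j => Hshm 2 (alpha + INR j - INR k) / (INR j * (alpha + INR j - INR k)))
        - fsum (k - r) (fun j => Hsh (alpha + INR j - INR k) / (alpha + INR j - INR k) ^ 2)
        + 2 * Hshm 3 (alpha - INR r) + Hsh (alpha - INR k) * zeta 2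
        + 2 * Hsh (alpha - INR r) * Hshm 2 (alpha - INR r)
        - 2 * Hshm 3 (alpha - INR k) - Hsh (alpha - INR r) * zeta 2
        - 2 * Hsh (alpha - INR k) * Hshm 2 (alpha - INR k) )
    - 1 / (INR k - INR r) *
        ( fsum m (fun j => (Hsh (alpha + INR j - INR m) - Hsh (INR r)) / (alpha + INR j - INR m - INR r) ^ 2)
        - fsum m (fun j => (zeta 2 - Hshm 2 (alpha + INR j - INR m)) / (alpha + INR j - INR m - INR r))
        - fsum m (fun j => (Hsh (alpha + INR j - INR m) - Hsh (INR k)) / (alpha + INR j - INR m - INR k) ^ 2)
        + fsum m (fun j => (zeta 2 - Hshm 2 (alpha + INR j - INR m)) / (alpha + INR j - INR m - INR k)) )).
Proof.
  assert (Hrk : INR r < INR k) by (apply lt_INR; exact hrk).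
  assert (Hpole : forall n j, (1 <= n)%nat -> (1 <= j)%nat -> INR n + (alpha + INR j - INR m) <> 0).
  { intros n j Hn Hj Heq. apply (hneg (n + j - 1)%nat).
    replace (S (n + j - 1)) with (n + j)%nat by lia. rewrite plus_INR. lra. }
  eapply series_ext.
  - eapply Un_cv_eq_lim.
    + apply series_minus.
      * apply (series_scal (1 / (INR k - INR r))), (series_H2_diff r alpha k); [lia | exact hka].
      * apply (series_fsum m (fun j n => 1 / ((INR n + INR r) * (INR n + INR k) * (INR n + (alpha + INR j - INR m)) ^ 2))).
        intros j Hj. pose proof (hjr j Hj). pose proof (hjk j Hj).
        apply series_two_poles; try lra; intros n Hn; try (apply Hpole; lia);
          pose proof (pos_INR r); pose proof (pos_INR k); assert (0 < INR n) by (apply lt_0_INR; lia); lra.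
    + unfold H2_diff_value. rewrite fsum_scal, !fsum_minus. ring.
  - intros n Hn. assert (0 < INR n) by (apply lt_0_INR; lia). pose proof (pos_INR r).
    symmetry; apply Hshm2_shift_over_two_poles; try lra.
    intros j Hj; apply Hpole; lia.
Qed.
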